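(* Let $\mathbf{F}$ be a field of characteristic $2$, $m\ge1$, and $A,B\in\{0,1\}^m$ with $|A|,|B|\ge2$. The following elements of $Q$ lie in $\ker(\pi)$. (a) If $A\cap B=\emptyset$, let $j\in B$ and $B'=B-\Delta_j$. Then $$\mathrm{Tr}(A)\mathrm{Tr}(B)+\mathrm{Tr}(A+\Delta_j)\mathrm{Tr}(B')+x_j\mathrm{Tr}(A+B')+x_j\mathrm{Tr}(A)\mathrm{Tr}(B')\in\ker(\pi).$$ (b) If $|A\cap B|\ge1$ and $B\le A$, let $i\in A\cap B$, $B'=B-\Delta_i$, $A'=A-\Delta_i$, and $J=A\setminus B$. Then $$\mathrm{Tr}(A)\mathrm{Tr}(B)+x_i\mathrm{Tr}(A)\mathrm{Tr}(B')+N_i\mathrm{Tr}(A')\mathrm{Tr}(B')+x_iN^{B'}\mathrm{Tr}(J+\Delta_i)\in\ker(\pi).$$ (c) If $|A\cap B|\ge1$, $A\not\le B$ and $B\not\le A$, put $I=A\cap B$, $J=A\setminus B$, $K=B\setminus A$. Then $$\mathrm{Tr}(A)\mathrm{Tr}(B)+\mathrm{Tr}(I+J+K)\mathrm{Tr}(I)+N^I\mathrm{Tr}(J)\mathrm{Tr}(K)\in\ker(\pi).$$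
   Context: Let $S=\mathbf{F}[x_1,y_1,\dots,x_m,y_m]$ with the $\mathbf{F}$-algebra automorphism $\sigma(x_i)=x_i$, $\sigma(y_i)=y_i+x_i$ of order 2, and let $S^{C_2}$ be the ring of $\sigma$-invariants. For $A=(a_1,\dots,a_m)\in\mathbb{N}^m$ write $x^A=\prod_s x_s^{a_s}$, $y^A=\prod_s y_s^{a_s}$, $N^A=\prod_s N_s^{a_s}$ where $N_s=y_s^2+x_sy_s$, $|A|=\sum_s a_s$. $A\le B$ means componentwise $\le$; sums/differences of sequences are componentwise. Elements of $\{0,1\}^m$ are identified with subsets of $\{1,\dots,m\}$; $\cap,\setminus$ are set operations and $i\in A$ means $a_i=1$. $\Delta_s$ has $1$ in position $s$ and $0$ elsewhere. For $A\in\{0,1\}^m$, $\mathrm{tr}(A)=y^A+\prod_s(y_s+x_s)^{a_s}$. Let $R=\mathbf{F}[x_1,\dots,x_m,N_1,\dots,N_m]$ (polynomial ring in $2m$ indeterminates), $Q=R[\mathrm{Tr}(A):A\in\{0,1\}^m,|A|\ge2]$ (polynomial ring), and $\pi:Q\to S^{C_2}$ the $\mathbf{F}$-algebra homomorphism with $\pi(x_i)=x_i$, $\pi(N_i)=y_i^2+x_iy_i$, $\pi(\mathrm{Tr}(A))=\mathrm{tr}(A)$. Convention: for $C$ with $|C|\le1$, $\mathrm{Tr}(0)=0$ and $\mathrm{Tr}(\Delta_s)=x_s$ in $Q$. *)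

From HB Require Import structures.
From mathcomp Require Import all_boot all_order all_algebra.
From mathcomp Require Export mpoly.
Set Implicit Arguments. Unset Strict Implicit. Unset Printing Implicit Defensive.
Import Order.TTheory GRing.Theory.
Local Open Scope ring_scope.

Section Defs.
Variables (F : fieldType) (m : nat).

Definition Sring := {mpoly F[m + m]}.
Definition Sx (i : 'I_m) : Sring := 'X_(lshift m i).
Definition Sy (i : 'I_m) : Sring := 'X_(rshift m i).
Definition SN (i : 'I_m) : Sring := Sy i ^+ 2 + Sx i * Sy i.
Definition sigma (p : Sring) : Sring :=
  mmap (@mpolyC _ F) (fun k : 'I_(m + m) =>
    match split k with inl i => Sx i | inr i => Sy i + Sx i end) p.
Definition str (A : {set 'I_m}) : Sring :=
  \prod_(s in A) Sy s + \prod_(s in A) (Sy s + Sx s).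
Definition SNpow (A : {set 'I_m}) : Sring := \prod_(s in A) SN s.

(* Q = F[x_1..x_m, N_1..N_m, Tr(A) : |A| >= 2]; the indeterminates are
   indexed by the finite type QVar, enumerated via enum_rank. *)
Definition QVar := ('I_m + 'I_m + {A : {set 'I_m} | (1 < #|A|)%N})%type.
Definition nQ := #|{: QVar}|.
Definition Qring := {mpoly F[nQ]}.
Definition QX (v : QVar) : Qring := 'X_(enum_rank v).
Definition Qx (i : 'I_m) : Qring := QX (inl (inl i)).
Definition QN (i : 'I_m) : Qring := QX (inl (inr i)).
(* Tr(A) in Q, with the convention Tr(0) = 0 and Tr(Delta_s) = x_s *)
Definition QTr (A : {set 'I_m}) : Qring :=
  match @insub _ (fun A : {set 'I_m} => (1 < #|A|)%N) _ A with
  | Some B => QX (inr B)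
  | None => if [pick s in A] is Some s then Qx s else 0
  end.
Definition QNpow (A : {set 'I_m}) : Qring := \prod_(s in A) QN s.

(* pi : Q -> S^{C_2} (viewed inside S), the F-algebra map
   x_i |-> x_i, N_i |-> y_i^2 + x_i y_i, Tr(A) |-> tr(A) *)
Definition piv (v : QVar) : Sring :=
  match v with
  | inl (inl i) => Sx i
  | inl (inr i) => SN i
  | inr A => str (val A)
  end.
Definition piQ (p : Qring) : Sring :=
  mmap (@mpolyC _ F) (fun k : 'I_nQ => piv (enum_val k)) p.

End Defs.

Arguments Sx {F m}. Arguments Sy {F m}. Arguments SN {F m}. Arguments str {F m}.
Arguments SNpow {F m}. Arguments QX {F m}. Arguments Qx {F m}. Arguments QN {F m}.
Arguments QTr {F m}. Arguments QNpow {F m}. Arguments piv {F m}. Arguments piQ {F m}.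
Arguments sigma {F m}.

From mathcomp Require Import all_boot all_order all_algebra.
From mathcomp Require Import mpoly ring.
Set Implicit Arguments. Unset Strict Implicit. Unset Printing Implicit Defensive.
Import GRing.Theory.
Local Open Scope ring_scope.

(** Put [z_s := y_s + x_s = sigma(y_s)].  Then [tr(C) = y^C + z^C] and
    [N_s = y_s z_s], while characteristic 2 gives [x_s = y_s + z_s].  Splitting
    every set occurring in (a), (b), (c) into disjoint blocks (a singleton, the
    parts [A :&: B], [A :\: B], [B :\: A], ...) turns the image under [pi] of each
    element into a polynomial in [y_s], [z_s] and the monomials [y^P], [z^P] of
    the blocks [P], all of whose coefficients are even. *)

Section Products.
Variables (R : comPzSemiRingType) (I : finType) (f : I -> R).

Lemma prod_setU (C D : {set I}) :
  [disjoint C & D] -> \prod_(i in C :|: D) f i = \prod_(i in C) f i * \prod_(i in D) f i.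
Proof. by move=> CD; rewrite -bigU //; apply: eq_bigl => i; rewrite inE. Qed.

Lemma prod_setU1 (a : I) (C : {set I}) :
  a \notin C -> \prod_(i in a |: C) f i = f a * \prod_(i in C) f i.
Proof. exact: big_setU1. Qed.

End Products.

Section Pchar2Identities.
Variables (R : comNzRingType) (hR : 2%N \in [pchar R]).
Implicit Types x y a b c : R.

Lemma pchar2_mulr2n x : x *+ 2 = 0.
Proof. by rewrite mulr2n addrr_pchar2. Qed.

Lemma pchar2_y_add_x x y : x = y + (y + x).
Proof. by rewrite addrA addrr_pchar2 ?add0r. Qed.

(* After [z := y + x], each left-hand side is twice a polynomial in [y], [z]. *)

Lemma pchar2_id_disjoint x y a a' b b' :
  (a + a') * (y * b + (y + x) * b') + (y * a + (y + x) * a') * (b + b')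
  + x * (a * b + a' * b') + x * (a + a') * (b + b') = 0.
Proof.
move: (y + x) (pchar2_y_add_x x y) => z ->.
rewrite -(pchar2_mulr2n ((y + z) * (a + a') * (b + b') + y * a * b + z * a' * b')).
by ring.
Qed.

Lemma pchar2_id_nested x y a a' b b' :
  (y * (a * b) + (y + x) * (a' * b')) * (y * b + (y + x) * b')
  + x * (y * (a * b) + (y + x) * (a' * b')) * (b + b')
  + (y ^+ 2 + x * y) * (a * b + a' * b') * (b + b')
  + x * (b * b') * (y * a + (y + x) * a') = 0.
Proof.
move: (y + x) (pchar2_y_add_x x y) => z ->.
rewrite -(pchar2_mulr2n (a' * b' * (b + b') * (y ^+ 2 + y * z + z ^+ 2)
  + a * b * y ^+ 2 * (b + b') *+ 2 + b * y * z * (a * b + a' * b' + a * b' *+ 2))).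
by ring.
Qed.

Lemma pchar2_id_crossing a a' b b' c c' :
  (a * b + a' * b') * (a * c + a' * c') + (a * b * c + a' * b' * c') * (a + a')
  + a * a' * (b + b') * (c + c') = 0.
Proof.
rewrite -(pchar2_mulr2n (a * a' * (b + b') * (c + c') + a ^+ 2 * b * c + a' ^+ 2 * b' * c')).
by ring.
Qed.

End Pchar2Identities.

Section KernelOfPi.
Variables (F : fieldType) (m : nat).
Implicit Types (C D : {set 'I_m}) (s : 'I_m).

Lemma piQD (p q : Qring F m) : piQ (p + q) = piQ p + piQ q.
Proof. exact: rmorphD. Qed.

Lemma piQM (p q : Qring F m) : piQ (p * q) = piQ p * piQ q.
Proof. exact: rmorphM. Qed.

Lemma piQX (v : QVar m) : piQ (QX v) = piv v :> Sring F m.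
Proof. by rewrite /piQ /QX mmapX mmap1U enum_rankK. Qed.

Lemma piQx s : piQ (Qx s) = Sx s :> Sring F m.
Proof. exact: piQX. Qed.

Lemma piQN s : piQ (QN s) = SN s :> Sring F m.
Proof. exact: piQX. Qed.

Lemma piQNpow C :
  piQ (QNpow C) = \prod_(s in C) Sy s * \prod_(s in C) (Sy s + Sx s) :> Sring F m.
Proof.
rewrite -big_split /=; transitivity (\prod_(s in C) piQ (QN s : Qring F m)).
  exact: rmorph_prod.
by apply: eq_bigr => s _; rewrite piQN /SN; ring.
Qed.

Hypothesis hF : 2%N \in [pchar F].

Lemma pchar2_Sring : 2%N \in [pchar (Sring F m)].
Proof. exact: (rmorph_pchar (@mpolyC (m + m) F) hF). Qed.

(* For [#|C| <= 1] this rests on the conventions [Tr(0) = 0], [Tr(Delta_s) = x_s]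
   and on characteristic 2. *)
Lemma piQTr C : piQ (QTr C) = str C :> Sring F m.
Proof.
rewrite /QTr; case: insubP => [D _ valD|C_small]; first by rewrite piQX /= valD.
case: pickP => [s Cs|C0].
  have -> : C = [set s].
    by apply/eqP; rewrite eq_sym eqEcard sub1set Cs cards1 leqNgt.
  by rewrite piQx /str !big_set1 addrA addrr_pchar2 ?pchar2_Sring ?add0r.
have -> : C = set0 by apply/setP => s; rewrite inE C0.
by rewrite [piQ _]raddf0 /str !big_set0 addrr_pchar2 // pchar2_Sring.
Qed.

Lemma piQ_kerA (A B : {set 'I_m}) :
  A :&: B = set0 -> forall j, j \in B ->
  let B' := B :\ j in
  piQ (QTr A * QTr B + QTr (j |: A) * QTr B' + Qx j * QTr (A :|: B')
       + Qx j * QTr A * QTr B') = 0 :> Sring F m.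
Proof.
move=> AB0 j Bj B'.
have AB'_disj : [disjoint A & B'].
  by apply: disjointWr (subD1set B j) _; rewrite -setI_eq0 AB0.
have jNA : j \notin A.
  by apply/negP => Aj; have := in_set0 j; rewrite -AB0 inE Aj Bj.
have jNB' : j \notin B' by rewrite !inE eqxx.
rewrite !(piQD, piQM) !piQTr piQx /str -(setD1K Bj) -/B'.
rewrite !prod_setU1 // !prod_setU //.
exact (pchar2_id_disjoint pchar2_Sring _ _ _ _ _ _).
Qed.

Lemma piQ_kerB (A B : {set 'I_m}) :
  B \subset A -> forall i, i \in A :&: B ->
  let B' := B :\ i in let A' := A :\ i in let J := A :\: B in
  piQ (QTr A * QTr B + Qx i * QTr A * QTr B' + QN i * QTr A' * QTr B'
       + Qx i * QNpow B' * QTr (i |: J)) = 0 :> Sring F m.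
Proof.
move=> BA i /setIP[Ai Bi] B' A' J.
have defA' : A' = J :|: B'.
  apply/setP => s; rewrite !inE; case: (eqVneq s i) => [->|_] /=; first by rewrite Bi.
  by case Bs: (s \in B) => /=; rewrite ?orbF ?(subsetP BA s Bs).
have JB'_disj : [disjoint J & B'].
  by apply/pred0P => s /=; rewrite !inE; case: (s \in B); rewrite ?andbF.
have iNJ : i \notin J by rewrite !inE Bi.
have iNB' : i \notin B' by rewrite !inE eqxx.
have iNJB' : i \notin J :|: B' by rewrite !inE Bi eqxx.
rewrite !(piQD, piQM) !piQTr piQx piQN piQNpow /str /SN.
rewrite -(setD1K Ai) -/A' -(setD1K Bi) -/B' defA'.
rewrite !prod_setU1 // !prod_setU //.
exact (pchar2_id_nested pchar2_Sring _ _ _ _ _ _).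
Qed.

Lemma piQ_kerC (A B : {set 'I_m}) :
  let I := A :&: B in let J := A :\: B in let K := B :\: A in
  piQ (QTr A * QTr B + QTr (I :|: J :|: K) * QTr I
       + QNpow I * QTr J * QTr K) = 0 :> Sring F m.
Proof.
move=> I J K.
have IJ_disj : [disjoint I & J].
  by apply/pred0P => s /=; rewrite !inE; case: (s \in B); rewrite ?andbF.
have IJK_disj : [disjoint I :|: J & K].
  by apply/pred0P => s /=; rewrite !inE; case: (s \in A); rewrite ?andbF.
have IK_disj := disjointWl (subsetUl I J) IJK_disj.
have defA : A = I :|: J by rewrite setID.
have defB : B = I :|: K by rewrite /I setIC setID.
rewrite !(piQD, piQM) !piQTr piQNpow /str defA defB !prod_setU //.
exact (pchar2_id_crossing pchar2_Sring _ _ _ _ _ _).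
Qed.

End KernelOfPi.

Theorem mainTheorem5 (F : fieldType) (hF : 2%N \in [pchar F]) (m : nat) (hm : (0 < m)%N)
    (A B : {set 'I_m}) (hA : (2 <= #|A|)%N) (hB : (2 <= #|B|)%N) :
  (* (a) *)
  (A :&: B = set0 ->
   forall j : 'I_m, j \in B ->
   let B' := B :\ j in
   piQ (QTr A * QTr B + QTr (j |: A) * QTr B' + Qx j * QTr (A :|: B')
        + Qx j * QTr A * QTr B') = 0 :> Sring F m)
  /\
  (* (b) *)
  ((1 <= #|A :&: B|)%N -> B \subset A ->
   forall i : 'I_m, i \in A :&: B ->
   let B' := B :\ i in let A' := A :\ i in let J := A :\: B in
   piQ (QTr A * QTr B + Qx i * QTr A * QTr B' + QN i * QTr A' * QTr B'
        + Qx i * QNpow B' * QTr (i |: J)) = 0 :> Sring F m)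
  /\
  (* (c) *)
  ((1 <= #|A :&: B|)%N -> ~~ (A \subset B) -> ~~ (B \subset A) ->
   let I := A :&: B in let J := A :\: B in let K := B :\: A in
   piQ (QTr A * QTr B + QTr (I :|: J :|: K) * QTr I
        + QNpow I * QTr J * QTr K) = 0 :> Sring F m).
Proof.
split; first exact: piQ_kerA.
split; first by move=> _ BA i; exact: piQ_kerB.
by move=> _ _ _; exact: piQ_kerC.
Qed.
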